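(* Let $J:[0,\infty)\to\mathbb R$ be a concave, nondecreasing function with $J(0)=0$, and let $k:(0,\infty)\to(0,\infty)$ be nondecreasing and satisfy $k(Cz)\le C\,k(z)$ for all $C\ge1$ and $z>0$. If $z>0$ satisfies $z^2\le A^2+B^2J\bigl(k(z)\bigr)$ for some $A,B>0$, then $$J(z)\le K\,J(A)\Bigl[1+J\bigl(k(A)\bigr)\Bigl(\frac BA\Bigr)^2\Bigr],$$ where $K$ is a universal constant. *)

From Stdlib Require Import Reals Lra.
Open Scope R_scope.

Definition concave_on_nonneg (J : R -> R) : Prop :=
  forall x y t, 0 <= x -> 0 <= y -> 0 <= t <= 1 ->
    t * J x + (1 - t) * J y <= J (t * x + (1 - t) * y).

Definition nondecreasing_on_nonneg (J : R -> R) : Prop :=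
  forall x y, 0 <= x -> x <= y -> J x <= J y.

Definition admissible_k (k : R -> R) : Prop :=
  (forall z, 0 < z -> 0 < k z) /\
  (forall x y, 0 < x -> x <= y -> k x <= k y) /\
  (forall C z, 1 <= C -> 0 < z -> k (C * z) <= C * k z).

From Stdlib Require Import Reals Lra Psatz.
Open Scope R_scope.

(* The theorem holds with K = 1.  Concavity and J 0 = 0 give J (C x) <= C J x
   for C >= 1, and the growth condition on k transfers this to J o k.  With
   C = z / A >= 1 and D = J (k A) (B / A)^2 the hypothesis becomes
   C^2 <= 1 + D C, whence C <= 1 + D and J z <= C J A <= (1 + D) J A. *)

Lemma concave_scale_le (J : R -> R) (C x : R) :
  concave_on_nonneg J -> J 0 = 0 -> 1 <= C -> 0 <= x -> J (C * x) <= C * J x.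
Proof.
  intros Hconc HJ0 HC Hx.
  assert (Ht : 0 <= / C <= 1).
  { split; [left; apply Rinv_0_lt_compat; lra|].
    rewrite <- Rinv_1; apply Rinv_le_contravar; lra. }
  pose proof (Hconc (C * x) 0 (/ C) ltac:(nra) ltac:(lra) Ht) as H.
  replace (/ C * (C * x) + (1 - / C) * 0) with x in H by (field; lra).
  rewrite HJ0, Rmult_0_r, Rplus_0_r in H.
  apply Rmult_le_compat_l with (r := C) in H; [|lra].
  rewrite <- Rmult_assoc, Rinv_r, Rmult_1_l in H; lra.
Qed.

Lemma nondecreasing_nonneg (J : R -> R) (x : R) :
  nondecreasing_on_nonneg J -> J 0 = 0 -> 0 <= x -> 0 <= J x.
Proof. intros Hmono HJ0 Hx; rewrite <- HJ0; apply Hmono; lra. Qed.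

Lemma admissible_comp_scale_le (J k : R -> R) (C x : R) :
  concave_on_nonneg J -> nondecreasing_on_nonneg J -> J 0 = 0 ->
  admissible_k k -> 1 <= C -> 0 < x -> J (k (C * x)) <= C * J (k x).
Proof.
  intros Hconc Hmono HJ0 [Hkpos [_ Hkscale]] HC Hx.
  apply Rle_trans with (J (C * k x)).
  - apply Hmono; [left; apply Hkpos; nra | apply Hkscale; lra].
  - apply concave_scale_le; auto; left; apply Hkpos; lra.
Qed.

Lemma quadratic_le_bound (C D : R) : 0 <= D -> C ^ 2 <= 1 + D * C -> C <= 1 + D.
Proof. intros HD HC; nra. Qed.

Theorem lemma3p3 :
  exists K : R, 0 < K /\
  forall (J k : R -> R) (z A B : R),
    concave_on_nonneg J -> nondecreasing_on_nonneg J -> J 0 = 0 ->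
    admissible_k k ->
    0 < z -> 0 < A -> 0 < B ->
    z ^ 2 <= A ^ 2 + B ^ 2 * J (k z) ->
    J z <= K * J A * (1 + J (k A) * (B / A) ^ 2).
Proof.
  exists 1; split; [lra|].
  intros J k z A B Hconc Hmono HJ0 Hk Hz HA HB Hineq.
  assert (HJA : 0 <= J A) by (apply nondecreasing_nonneg; auto; lra).
  assert (HJkA : 0 <= J (k A))
    by (apply nondecreasing_nonneg; auto; left; apply Hk; lra).
  set (D := J (k A) * (B / A) ^ 2).
  assert (HD : 0 <= D) by (apply Rmult_le_pos; [lra | apply pow2_ge_0]).
  destruct (Rle_lt_dec z A) as [HzA | HAz].
  - assert (J z <= J A) by (apply Hmono; lra); nra.
  - set (C := z / A).
    assert (HzC : z = C * A) by (unfold C; field; lra).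
    assert (HC : 1 <= C)
      by (unfold C; apply Rmult_le_reg_r with A; [lra | field_simplify; lra]).
    assert (HJkz : J (k z) <= C * J (k A))
      by (rewrite HzC; apply admissible_comp_scale_le; auto).
    assert (Hquad : C ^ 2 <= 1 + D * C).
    { apply Rmult_le_reg_r with (A ^ 2); [nra|].
      replace ((1 + D * C) * A ^ 2) with (A ^ 2 + B ^ 2 * (C * J (k A)))
        by (unfold D; field; lra).
      replace (C ^ 2 * A ^ 2) with (z ^ 2) by (rewrite HzC; ring); nra. }
    pose proof (quadratic_le_bound C D HD Hquad).
    rewrite HzC.
    apply Rle_trans with (C * J A); [apply concave_scale_le; auto; lra|].
    fold D; nra.
Qed.
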